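(* Let $L, H \in \mathcal{L}$, $\gamma \in Z^1(L,T)$, $\sigma \in Z^1(H,T)$ and $g \in S$. Then $C_L(\gamma)^g \leq C_H(\sigma)$ if and only if $L^g \leq H$ and $\sigma^g_L - \gamma = \zeta_{L,H,g}$ (as maps $L \to T$).
   Context: Conventions: for a group $G$ acting on the right on an additive abelian group $M$, $Z^n(G,M)$, $B^n(G,M)$ are normalised cocycles and coboundaries; for $\tau \in Z^2(G,M)$, $\mathrm{Ext}(\tau)$ is $G\times M$ with $(g,m)(h,n) = (gh, m^h+n+\tau(g,h))$. Setting: $S$ is an infinite pro-$p$-group of finite coclass, $T = \gamma_\ell(S)$ ($\ell$ large) with $T \cong \mathbb{Z}_p^d$, $P = S/T$ a finite $p$-group, the series $T_0=T$, $T_{i+1} = [T_i,S]$ having all indices $p$. $T$ is an additive $P$-module via conjugation, $S = \mathrm{Ext}(\rho)$ for some $\rho \in Z^2(P,T)$, $\epsilon: S\to P$ the projection, $T$ identified with $\{(1,t)\}$; elements of $S$ act on $P$ and $T$ through their image in $P$, and $L^g$ denotes conjugation by $\epsilon(g)$. For $L \leq P$, $\overline{L} = \epsilon^{-1}(L)$. $\mathcal{L}$ is the set of elementary abelian $L \leq P$ with $\rho_L \in B^2(L,T)$. For $L \in \mathcal{L}$ a complement $C_L = \{c_L(l)\}$ to $T$ in $\overline{L}$ is fixed, $c_L(l) = (l,t_L(l))$, and for $\delta \in Z^1(L,T)$, $C_L(\delta) = \{(l,t_L(l)+\delta(l)) \mid l\in L\}$. For $L,H\in\mathcal{L}$ and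 $g \in S$ with $L^g \leq H$ define $\zeta_{L,H,g}: L \to S$, $l \mapsto (c_H(l^g)^{-1})^{g^{-1}} \cdot c_L(l)$, and for $\sigma \in Z^1(H,T)$ define $\sigma^g_L : L \to T$, $l \mapsto \sigma(l^g)^{g^{-1}}$ (an element of $Z^1(L,T)$). Equalities of maps into $T$ with maps into $S$ use the identification $t \leftrightarrow (1,t)$. *)

From HB Require Import structures.
From mathcomp Require Import all_boot all_order all_algebra all_fingroup all_solvable.
From mathcomp Require Import abelian.
Set Implicit Arguments. Unset Strict Implicit. Unset Printing Implicit Defensive.
Import GRing.Theory.
Local Open Scope ring_scope.

Section Defs.
Variables (P : finGroupType) (T : zmodType).

(* [act m g] = m^g : right action of P on the additive abelian group T. *)
Definition is_raction (act : T -> P -> T) : Prop :=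
  [/\ forall m n g, act (m + n) g = act m g + act n g,
      forall m, act m 1%g = m
    & forall m g h, act (act m g) h = act m (g * h)%g].

Definition is_Z2 (act : T -> P -> T) (rho : P -> P -> T) : Prop :=
  [/\ forall g, rho 1%g g = 0,
      forall g, rho g 1%g = 0
    & forall g h k, act (rho g h) k + rho (g * h)%g k = rho h k + rho g (h * k)%g].

Definition ext_mul act rho (x y : P * T) : P * T :=
  ((x.1 * y.1)%g, act x.2 y.1 + y.2 + rho x.1 y.1).
Definition ext_inv (act : T -> P -> T) (rho : P -> P -> T) (x : P * T) : P * T :=
  ((x.1)^-1%g, - act x.2 (x.1)^-1%g - rho x.1 (x.1)^-1%g).
Definition ext_conj act rho (x g : P * T) : P * T :=
  ext_mul act rho (ext_mul act rho (ext_inv act rho g) x) g.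

(* normalised 1-cocycles on L, i.e. elements of Z^1(L,T) (values off L irrelevant) *)
Definition is_Z1_on (act : T -> P -> T) (L : {set P}) (d : P -> T) : Prop :=
  d 1%g = 0 /\ {in L &, forall l k, d (l * k)%g = act (d l) k + d k}.

Definition is_B2_on (act : T -> P -> T) (rho : P -> P -> T) (L : {set P}) : Prop :=
  exists f : P -> T, f 1%g = 0 /\
    {in L &, forall l k, rho l k = act (f l) k + f k - f (l * k)%g}.

Definition in_calL (p : nat) act rho (L : {group P}) : Prop :=
  (p.-abelem L)%g /\ is_B2_on act rho L.

(* C_L = {(l, t l) | l in L} is a complement to T in epsilon^-1(L), i.e. it is a
   subgroup of Ext(rho) (closed under multiplication; L is finite). *)
Definition is_complement_fn act rho (L : {set P}) (t : P -> T) : Prop :=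
  {in L &, forall l k, ext_mul act rho (l, t l) (k, t k) = ((l * k)%g, t (l * k)%g)}.

Definition in_CL (L : {set P}) (t d : P -> T) (x : P * T) : Prop :=
  exists2 l, l \in L & x = (l, t l + d l).

Definition zeta act rho (tL tH : P -> T) (g : P * T) (l : P) : P * T :=
  ext_mul act rho
    (ext_conj act rho (ext_inv act rho ((l ^ g.1)%g, tH (l ^ g.1)%g)) (ext_inv act rho g))
    (l, tL l).

Definition sigma_conj (act : T -> P -> T) (sig : P -> T) (g : P * T) (l : P) : T :=
  act (sig (l ^ g.1)%g) (g.1)^-1%g.

End Defs.

(** The extension [Ext rho] is a group, so the statement is a computation in
    that group.  The first coordinate of [x^g] is [x.1^(g.1)], so the
    conjugate of [(l, tL l + gam l)] can only lie in [C_H(sig)] when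
    [l^g] lies in [H], and then it must equal [c_H(l^g) sig(l^g)].  Writing
    [(l, tL l + gam l) = c_L(l) gam(l)], the equation
    [(c_L(l) gam(l))^g = c_H(l^g) sig(l^g)] is equivalent to
    [(c_H(l^g)^-1)^(g^-1) c_L(l) = sig(l^g)^(g^-1) gam(l)^-1], which is the
    zeta identity.  None of the hypotheses on [p], on [L, H] being in
    [calL], on the complements or on the cocycles [gam, sig] is needed. *)
From HB Require Import structures.
From mathcomp Require Import all_boot all_order all_algebra all_fingroup all_solvable.
Set Implicit Arguments. Unset Strict Implicit.
Import GRing.Theory.
Local Open Scope ring_scope.

Lemma mulg_eq_swap (G : groupType) (x y u v : G) :
  (x * y = u * v <-> u^-1 * x = v * y^-1)%g.
Proof.
split=> E; first by rewrite -(mulgK y (u^-1 * x)%g) -(mulgA u^-1%g) E mulKg.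
by rewrite -(mulKVg u x) E !mulgA mulgVK.
Qed.

Lemma conjMg_eq_swap (G : groupType) (c d c' s g : G) :
  ((c * d) ^ g = c' * s <-> (c' ^ g^-1)^-1 * c = s ^ g^-1 * d^-1)%g.
Proof.
apply: (@iff_trans _ (c * d = c' ^ g^-1 * s ^ g^-1)%g); last exact: mulg_eq_swap.
by rewrite -conjMg; split=> [<- | ->]; rewrite ?conjgK ?conjgKV.
Qed.

Section ExtGroup.
Local Open Scope group_scope.
Variables (P : finGroupType) (T : zmodType) (act : T -> P -> T) (rho : P -> P -> T).
Hypothesis actP : is_raction act.
Hypothesis rhoP : is_Z2 act rho.

Local Notation mul := (ext_mul act rho).
Local Notation one := ((1, 0) : P * T).

Lemma actD x y g : act (x + y) g = act x g + act y g.
Proof. by case: actP. Qed.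

Lemma act1 x : act x 1 = x.
Proof. by case: actP. Qed.

Lemma actM x g h : act (act x g) h = act x (g * h).
Proof. by case: actP. Qed.

Lemma act0 g : act 0 g = 0.
Proof. by apply: (addrI (act 0 g)); rewrite -actD !addr0. Qed.

Lemma actN x g : act (- x) g = - act x g.
Proof. by apply: (addrI (act x g)); rewrite -actD !subrr act0. Qed.

Lemma ext_mulA : associative mul.
Proof.
move=> [g a] [h b] [k c]; rewrite /ext_mul /=; congr pair; first exact: mulgA.
have [_ _ cocycle] := rhoP.
rewrite !actD actM [in RHS](addrAC _ c) -[in RHS](addrA _ (act _ k)) cocycle.
by rewrite addrAC !addrA.
Qed.

Lemma ext_mul1g : left_id one mul.
Proof.
by move=> [h b]; have [rho1 _ _] := rhoP; rewrite /ext_mul /= mul1g act0 add0r rho1 addr0.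
Qed.

Lemma ext_mulg1 : right_id one mul.
Proof.
by move=> [h b]; have [_ rho1 _] := rhoP; rewrite /ext_mul /= mulg1 act1 rho1 !addr0.
Qed.

Lemma ext_mulgV : right_inverse one (ext_inv act rho) mul.
Proof. by move=> [h b]; rewrite /ext_mul /ext_inv /= mulgV addrA subrr add0r addNr. Qed.

Lemma ext_mulVg : left_inverse one (ext_inv act rho) mul.
Proof.
move=> [h b]; rewrite /ext_mul /ext_inv /= mulVg; congr pair.
have [rho1 rho1' cocycle] := rhoP.
rewrite actD !actN !actM mulVg act1.
have := cocycle h h^-1 h; rewrite mulgV mulVg rho1 rho1' !addr0 => ->.
by rewrite [- b - _]addrC -!addrA addKr addNr.
Qed.

(* The group structure on [ext] depends on [actP] and [rhoP]; it is only
   canonical inside this section. *)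
Definition ext : Type := (P * T)%type.
HB.instance Definition _ := Choice.on ext.
HB.instance Definition _ :=
  isGroup.Build ext ext_mulA ext_mul1g ext_mulg1 ext_mulVg ext_mulgV.

Lemma ext_mulE (x y : ext) : x * y = ext_mul act rho x y.
Proof. by []. Qed.

Lemma ext_invE (x : ext) : x^-1 = ext_inv act rho x.
Proof. by []. Qed.

Lemma ext_conjE (x g : ext) : ext_conj act rho x g = x ^ g.
Proof. by rewrite /ext_conj conjgE mulgA. Qed.

Lemma ext_mulT l a b : ((l, a) : ext) * ((1, b) : ext) = (l, a + b) :> ext.
Proof. by have [_ rho1 _] := rhoP; rewrite ext_mulE /ext_mul /= mulg1 act1 rho1 addr0. Qed.

Lemma ext_invT a : ((1, a) : ext)^-1 = (1, - a) :> ext.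
Proof. by have [rho1 _ _] := rhoP; rewrite ext_invE /ext_inv /= invg1 act1 rho1 subr0. Qed.

Lemma ext_Tmul a (x : ext) : ((1, a) : ext) * x = x * ((1, act a x.1) : ext).
Proof.
have [rho1 _ _] := rhoP; case: x => h b.
by rewrite ext_mulT ext_mulE /ext_mul /= mul1g rho1 addr0 addrC.
Qed.

Lemma ext_conjT a (x : ext) : ((1, a) : ext) ^ x = (1, act a x.1) :> ext.
Proof. by rewrite conjgE ext_Tmul mulKg. Qed.

Lemma conj_CL_iff (L H : {set P}) (tL tH gam sig : P -> T) (g : ext) l :
  in_CL H tH sig (ext_conj act rho (l, tL l + gam l) g) <->
  (l ^ g.1 \in H /\
   zeta act rho tL tH g l = (1, sigma_conj act sig g l - gam l) :> ext).
Proof.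
pose cL : ext := (l, tL l); pose cH : ext := (l ^ g.1, tH (l ^ g.1)).
have -> : zeta act rho tL tH g l = (cH ^ g^-1)^-1 * cL.
  by rewrite /zeta ext_conjE conjVg.
have -> : (1, sigma_conj act sig g l - gam l) =
    ((1, sig (l ^ g.1)) : ext) ^ g^-1 * ((1, gam l) : ext)^-1.
  by rewrite ext_invT ext_conjT ext_mulT.
rewrite ext_conjE; split=> [[h Hh E] | [Hl /conjMg_eq_swap E]].
  have El : l ^ g.1 = h := congr1 fst E.
  by split; [rewrite El | apply/conjMg_eq_swap; rewrite !ext_mulT E -El].
by exists (l ^ g.1); rewrite // -!ext_mulT.
Qed.

End ExtGroup.

Theorem theorem3p2 (p : nat) (P : finGroupType) (T : zmodType)
    (act : T -> P -> T) (rho : P -> P -> T) (L H : {group P})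
    (tL tH gam sig : P -> T) (g : P * T) :
  prime p -> (p.-group [set: P])%g ->
  is_raction act -> is_Z2 act rho ->
  in_calL p act rho L -> in_calL p act rho H ->
  is_complement_fn act rho L tL -> is_complement_fn act rho H tH ->
  is_Z1_on act L gam -> is_Z1_on act H sig ->
  (forall l, l \in L -> in_CL H tH sig (ext_conj act rho (l, tL l + gam l) g)) <->
  ((L :^ g.1)%g \subset H /\
   forall l, l \in L ->
     zeta act rho tL tH g l = (1%g, sigma_conj act sig g l - gam l)).
Proof.
move=> _ _ actP rhoP _ _ _ _ _ _.
have criterion := conj_CL_iff actP rhoP L H tL tH gam sig g.
split=> [inC | [sLgH zetaE] l Ll].
  split=> [|l Ll]; last by have [] := (criterion l).1 (inC l Ll).
  apply/subsetP=> _ /imsetP[l Ll ->].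
  by have [] := (criterion l).1 (inC l Ll).
by apply/criterion; rewrite zetaE // (subsetP sLgH) ?memJ_conjg.
Qed.
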